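(* Let $\mathbf{A}$ be a POVM on $\mathbb{C}^2$. Then $\mathbf{A}$ is projective-simulable if and only if the pair of measurements $\{\mathbf{A},\bar{\mathbf{A}}\}$ cannot demonstrate EPR steering on any bipartite quantum state in which the measured party has local dimension 2.
   Context: A POVM on $\mathbb{C}^d$ with $n$ outcomes is a tuple $\mathbf{A}=(A_1,\ldots,A_n)$ of positive semidefinite operators with $\sum_a A_a=\mathbb{I}$; it is projective if all effects are projectors. A POVM $\mathbf{A}$ is projective-simulable if there are a probability distribution $p(j)$ over finitely many projective POVMs $\mathbf{B}^{(j)}$ on $\mathbb{C}^d$ and conditional distributions $q(i|j,i')$ such that $A_i=\sum_j p(j)\sum_{i'}q(i|j,i')B^{(j)}_{i'}$ for all $i$. For a qubit POVM, $\bar{\mathbf{A}}=(\bar A_i)$ with $\bar A_i=\mathrm{Tr}(A_i)\mathbb{I}-A_i$. A set of measurements $\{\mathbf{A}^{(x)}\}_x$ on $\mathbb{C}^2$ applied by one party to a state $\rho$ on $\mathbb{C}^2\otimes\mathbb{C}^{d'}$ produces the assemblage $\sigma_{a|x}=\mathrm{Tr}_1[(A^{(x)}_a\otimes\mathbb{I})\rho]$; it demonstrates steering if there is no local hidden state model, i.e. no probability distribution $\pi(\lambda)$, states $\sigma_\lambda$ on $\mathbb{C}^{d'}$ and conditional distributions $p(a|x,\lambda)$ with $\sigma_{a|x}=\sum_\lambda\pi(\lambda)p(a|x,\lambda)\sigma_\lambda$ for all $a,x$. *)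

(* complex numbers are modelled by algC (algebraic complex numbers). *)
From HB Require Import structures.
From mathcomp Require Import all_boot all_order all_algebra all_field.
Set Implicit Arguments. Unset Strict Implicit. Unset Printing Implicit Defensive.
Import Order.TTheory GRing.Theory Num.Theory.
Local Open Scope ring_scope.

Definition adj_mx m n (M : 'M[algC]_(m, n)) : 'M[algC]_(n, m) := (map_mx Num.conj M)^T.

Definition psd n (M : 'M[algC]_n) : Prop :=
  forall v : 'cV[algC]_n, 0 <= (adj_mx v *m M *m v) 0 0.

Definition povm d k (A : 'I_k -> 'M[algC]_d) : Prop :=
  (forall a, psd (A a)) /\ \sum_(a < k) A a = 1%:M.

Definition projective_povm d k (A : 'I_k -> 'M[algC]_d) : Prop :=
  povm A /\ forall a, A a *m A a = A a.

Definition prob_dist (I : finType) (p : I -> algC) : Prop :=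
  (forall i, 0 <= p i) /\ \sum_i p i = 1.

Definition projective_simulable d n (A : 'I_n -> 'M[algC]_d) : Prop :=
  exists (K : nat) (p : 'I_K -> algC) (m : 'I_K -> nat)
         (B : forall j : 'I_K, 'I_(m j) -> 'M[algC]_d)
         (q : forall j : 'I_K, 'I_(m j) -> 'I_n -> algC),
    prob_dist p /\
    (forall j, projective_povm (B j)) /\
    (forall j i', prob_dist (q j i')) /\
    (forall i, A i = \sum_(j < K) p j *: \sum_(i' < m j) q j i' i *: B j i').

Definition bar_povm n (A : 'I_n -> 'M[algC]_2) : 'I_n -> 'M[algC]_2 :=
  fun i => \tr (A i) *: 1%:M - A i.

Definition state n (rho : 'M[algC]_n) : Prop := psd rho /\ \tr rho = 1.

(* X (x) I on C^2 (x) C^d, with the basis |i> (x) |k> indexed by mxvec_index i k *)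
Definition tens_id d (X : 'M[algC]_2) : 'M[algC]_(2 * d) :=
  \sum_(i < 2) \sum_(j < 2) \sum_(k < d)
     X i j *: delta_mx (mxvec_index i k) (mxvec_index j k).

Definition ptrace1 d (Y : 'M[algC]_(2 * d)) : 'M[algC]_d :=
  \matrix_(k < d, l < d) \sum_(i < 2) Y (mxvec_index i k) (mxvec_index i l).

Definition assemblage d (X : Type) n (Meas : X -> 'I_n -> 'M[algC]_2)
  (rho : 'M[algC]_(2 * d)) (x : X) (a : 'I_n) : 'M[algC]_d :=
  ptrace1 (tens_id d (Meas x a) *m rho).

Definition has_LHS d (X : Type) n (sigma : X -> 'I_n -> 'M[algC]_d) : Prop :=
  exists (L : nat) (pi : 'I_L -> algC) (sl : 'I_L -> 'M[algC]_d)
         (pcond : X -> 'I_L -> 'I_n -> algC),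
    prob_dist pi /\
    (forall l, state (sl l)) /\
    (forall x l, prob_dist (pcond x l)) /\
    (forall x a, sigma x a = \sum_(l < L) (pi l * pcond x l a) *: sl l).

Definition demonstrates_steering d (X : Type) n (Meas : X -> 'I_n -> 'M[algC]_2)
  (rho : 'M[algC]_(2 * d)) : Prop :=
  ~ has_LHS (assemblage Meas rho).

Definition pair_A_barA n (A : 'I_n -> 'M[algC]_2) : bool -> 'I_n -> 'M[algC]_2 :=
  fun x => if x then bar_povm A else A.

From HB Require Import structures.
From mathcomp Require Import all_boot all_order all_algebra all_field ring.
From Stdlib Require Import Classical_Prop.
Set Implicit Arguments. Unset Strict Implicit. Unset Printing Implicit Defensive.
Import Order.TTheory GRing.Theory Num.Theory.
Local Open Scope ring_scope.

(* Both conditions are equivalent to the joint measurability of A and bar A.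
   If P is projective, its effects are mutually orthogonal, so G_ik = P_i bar(P_k) P_i
   is a joint measurement of P and bar P; joint measurability survives mixing and
   classical post-processing.  Conversely, split a joint measurement G_ab into rank-one
   terms v v^*; since bar (v v^* ) = |v|^2 (1 - P_v) for the projector P_v onto v, the
   mixture with weights |v|^2 / 2 of the measurements {P_v, 1 - P_v}, with outcomes
   relabelled a and b, reproduces (A + bar bar A) / 2 = A.
   A joint measurement G yields a local hidden state model on any state: the hidden
   states are the normalized conditional states of G_ab, with deterministic responses.
   Conversely, on the maximally entangled two-qubit state the assemblage is
   (A^x_a)^T / 2, so a local hidden state model transposes into a joint measurement. *)

(** * Positive semidefinite matrices *)

Lemma adj_mxE m n (M : 'M[algC]_(m, n)) i j : adj_mx M i j = (M j i)^*.
Proof. by rewrite /adj_mx !mxE. Qed.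

Lemma adj_mxK m n (M : 'M[algC]_(m, n)) : adj_mx (adj_mx M) = M.
Proof. by apply/matrixP=> i j; rewrite !adj_mxE conjCK. Qed.

Lemma adj_mxD m n (A B : 'M[algC]_(m, n)) : adj_mx (A + B) = adj_mx A + adj_mx B.
Proof. by apply/matrixP=> i j; rewrite !(adj_mxE, mxE) rmorphD. Qed.

Lemma adj_mxZ m n c (A : 'M[algC]_(m, n)) : adj_mx (c *: A) = c^* *: adj_mx A.
Proof. by apply/matrixP=> i j; rewrite !(adj_mxE, mxE) rmorphM. Qed.

Lemma adj_mxM m n p (A : 'M[algC]_(m, n)) (B : 'M[algC]_(n, p)) :
  adj_mx (A *m B) = adj_mx B *m adj_mx A.
Proof. by rewrite /adj_mx map_mxM trmx_mul. Qed.

Lemma adj_delta n (i : 'I_n) : adj_mx (delta_mx i 0 : 'cV_n) = delta_mx 0 i.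
Proof. by rewrite /adj_mx map_delta_mx trmx_delta. Qed.

Lemma conj_ge0 (x : algC) : 0 <= x -> x^* = x.
Proof. by move=> /ger0_real/conj_Creal. Qed.

Lemma qfE n (M : 'M[algC]_n) (v : 'cV_n) :
  (adj_mx v *m M *m v) 0 0 = \sum_i \sum_j (v i 0)^* * M i j * v j 0.
Proof.
rewrite mxE [RHS]exchange_big; apply: eq_bigr => j _; rewrite mxE big_distrl.
by apply: eq_bigr => i _; rewrite adj_mxE.
Qed.

Lemma bil_delta n (M : 'M[algC]_n) (i j : 'I_n) :
  adj_mx (delta_mx i 0 : 'cV_n) *m M *m (delta_mx j 0 : 'cV_n) = (M i j)%:M.
Proof.
apply/matrixP=> k l; rewrite [k]ord1 [l]ord1 adj_delta -rowE -colE.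
by rewrite !mxE eqxx mulr1n.
Qed.

Lemma qf2 n (M : 'M[algC]_n) (i j : 'I_n) (x y : algC) :
  let v := x *: (delta_mx i 0 : 'cV_n) + y *: delta_mx j 0 in
  (adj_mx v *m M *m v) 0 0 =
  x^* * x * M i i + x^* * y * M i j + y^* * x * M j i + y^* * y * M j j.
Proof.
rewrite /= adj_mxD !adj_mxZ !mulmxDl !mulmxDr -!scalemxAl -!scalemxAr.
by rewrite !bil_delta !mxE /= mulr1n; ring.
Qed.

Section PositiveSemidefinite.
Variable n : nat.
Implicit Types (M N : 'M[algC]_n) (v : 'cV[algC]_n).

Lemma psd0 : psd (0 : 'M[algC]_n).
Proof. by move=> v; rewrite mulmx0 mul0mx mxE. Qed.

Lemma psdD M N : psd M -> psd N -> psd (M + N).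
Proof. by move=> hM hN v; rewrite mulmxDr mulmxDl mxE addr_ge0. Qed.

Lemma psdZ c M : 0 <= c -> psd M -> psd (c *: M).
Proof. by move=> hc hM v; rewrite -scalemxAr -scalemxAl mxE mulr_ge0. Qed.

Lemma psd_sum (I : finType) (P : pred I) (F : I -> 'M[algC]_n) :
  (forall i, P i -> psd (F i)) -> psd (\sum_(i | P i) F i).
Proof. by move=> hF; apply: (big_ind (@psd n)) => //; [apply: psd0 | apply: psdD]. Qed.

Lemma psd1 : psd (1%:M : 'M[algC]_n).
Proof.
move=> v; rewrite mulmx1 mxE; apply: sumr_ge0 => i _.
by rewrite adj_mxE mulrC mul_conjC_ge0.
Qed.

Lemma psd_congr m (W : 'M[algC]_(n, m)) M : psd M -> psd (adj_mx W *m M *m W).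
Proof. by move=> hM v; have := hM (W *m v); rewrite adj_mxM !mulmxA. Qed.

Lemma psd_diag M i : psd M -> 0 <= M i i.
Proof. by move=> /(_ (delta_mx i 0)); rewrite bil_delta mxE eqxx mulr1n. Qed.

Lemma psd_trace_ge0 M : psd M -> 0 <= \tr M.
Proof. by move=> hM; apply: sumr_ge0 => i _; apply: psd_diag. Qed.

(* Polarization: the form is real on the test vectors e_i + e_j and e_i + 'i e_j. *)
Lemma psd_herm M i j : psd M -> M j i = (M i j)^*.
Proof.
move=> hM; have [->|ij] := eqVneq i j; first by rewrite conj_ge0 // psd_diag.
have dii := conj_ge0 (psd_diag i hM); have djj := conj_ge0 (psd_diag j hM).
have := conj_ge0 (hM (1 *: delta_mx i 0 + 1 *: delta_mx j 0)).
have := conj_ge0 (hM (1 *: delta_mx i 0 + 'i *: delta_mx j 0)).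
rewrite !qf2 conjC1 conjCi !mul1r !mulr1 !(rmorphD, rmorphM, rmorphN) /=.
rewrite conjCi dii djj; set a := M i j; set b := M j i => e2 e1.
have E1 : a + b - (a^* + b^*) = 0.
  transitivity ((M i i + a + b + M j j) - (M i i + a^* + b^* + M j j)); first by ring.
  by rewrite e1 subrr.
have E2 : 'i * (a - b) + 'i * (a^* - b^*) = 0.
  transitivity ((M i i + 'i * a + - 'i * b + - 'i * 'i * M j j) -
    (M i i + - 'i * a^* + - - 'i * b^* + - - 'i * - 'i * M j j)); first by ring.
  by rewrite e2 subrr.
have : (b - a^*) * 2 = 0.
  transitivity ((a + b - (a^* + b^*)) + 'i * ('i * (a - b) + 'i * (a^* - b^*))
     - ('i ^+ 2 + 1) * ((a - b) + (a^* - b^*))); first by ring.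
  by rewrite E1 E2 sqrCi addNr !mul0r mulr0 !addr0 subr0.
by move/eqP; rewrite mulf_eq0 pnatr_eq0 orbF subr_eq0 => /eqP.
Qed.

(* The form takes the value -1 at x e_i + e_j with x = -(M j j + 1) / (2 (M i j)^* ). *)
Lemma psd_diag0_row M i j : psd M -> M i i = 0 -> M i j = 0.
Proof.
move=> hM Mii0; apply/eqP/negPn/negP => Mij0.
have Mij0' : (M i j)^* != 0 by rewrite conjC_eq0.
have Mjj := conj_ge0 (psd_diag j hM).
have := hM ((- (M j j + 1) / (2 * (M i j)^*)) *: delta_mx i 0 + 1 *: delta_mx j 0).
rewrite qf2 Mii0 (psd_herm i j hM) conjC1 !(rmorphM, rmorphN, rmorphD, fmorphV) /=.
rewrite Mjj conjC1 conjCK mulr0 add0r !mul1r !mulr1; set c := M i j.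
suff -> : - (M j j + 1) / ((1 + 1) * c) * c + - (M j j + 1) / (2 * c^*) * c^* +
  M j j = -1 by rewrite oppr_ge0 ler10.
by field; rewrite Mij0 Mij0'.
Qed.

Lemma psd_trace_eq0 M : psd M -> \tr M = 0 -> M = 0.
Proof.
move=> hM /eqP; rewrite psumr_eq0 => [/allP diag0|i _]; last exact: psd_diag.
apply/matrixP=> i j; rewrite mxE psd_diag0_row //.
by apply/eqP/diag0/mem_index_enum.
Qed.

End PositiveSemidefinite.

Lemma rank1E n (u : 'cV[algC]_n) i j : (u *m adj_mx u) i j = u i 0 * (u j 0)^*.
Proof. by rewrite mxE big_ord1 adj_mxE. Qed.

Lemma psd_rank1 n (u : 'cV[algC]_n) : psd (u *m adj_mx u).
Proof. by have := psd_congr (adj_mx u) (psd1 (n := 1)); rewrite adj_mxK mulmx1. Qed.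

Lemma psd_trmx n (M : 'M[algC]_n) : psd M -> psd M^T.
Proof.
move=> hM v; have := hM (map_mx Num.conj v); rewrite !qfE exchange_big /=.
by congr (0 <= _); apply: eq_bigr => i _; apply: eq_bigr => j _; rewrite !mxE conjCK; ring.
Qed.

Lemma ord2P (i : 'I_2) : i = 0 \/ i = 1.
Proof. by case: i => [[|[|k]]] // lt_i2; [left|right]; apply: val_inj. Qed.

Lemma mx2P (M N : 'M[algC]_2) :
  M 0 0 = N 0 0 -> M 0 1 = N 0 1 -> M 1 0 = N 1 0 -> M 1 1 = N 1 1 -> M = N.
Proof. by move=> *; apply/matrixP=> i j; case: (ord2P i) (ord2P j) => -> [] ->. Qed.

Definition col2 (x y : algC) : 'cV[algC]_2 := \col_i (if i == 0 then x else y).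

(* Cholesky: for M 0 0 <> 0, M = u u^* + w w^* with u = (s, (M 0 1)^* / s), w = (0, t),
   where s^2 = M 0 0 and t^2 = det M / M 0 0. *)
Lemma psd2_rank1_sum (M : 'M[algC]_2) : psd M ->
  exists u w : 'cV[algC]_2, M = u *m adj_mx u + w *m adj_mx w.
Proof.
move=> hM; have M10 := psd_herm 0 1 hM.
have Maa := conj_ge0 (psd_diag 0 hM); have Mcc := conj_ge0 (psd_diag 1 hM).
set a := M 0 0 in Maa *; set b := M 0 1 in M10 *; set c := M 1 1 in Mcc *.
have [a0|a_neq0] := eqVneq a 0.
  have b0 : b = 0 := psd_diag0_row 1 hM a0.
  exists (col2 0 (sqrtC c)), 0; rewrite mul0mx addr0.
  apply: mx2P; rewrite rank1E !mxE /= ?M10 -/a -/b -/c ?a0 ?b0 ?conjC0 ?mul0r ?mulr0 //.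
  by rewrite conj_ge0 ?sqrtC_ge0 ?psd_diag // -expr2 sqrtCK.
have a_gt0 : 0 < a by rewrite lt_def a_neq0 psd_diag.
have det_ge0 : 0 <= (a * c - b * b^*) / a.
  apply: divr_ge0 (ltW a_gt0); rewrite -(pmulr_rge0 _ a_gt0).
  have := hM ((- b) *: delta_mx 0 0 + a *: delta_mx 1 0).
  by rewrite qf2 M10 rmorphN /= Maa -/a -/b -/c; congr (0 <= _); ring.
pose s := sqrtC a; pose t := sqrtC ((a * c - b * b^*) / a).
have s_neq0 : s != 0 by rewrite sqrtC_eq0.
have s2 : s * s = a by rewrite -expr2 sqrtCK.
have t2 : t * t = (a * c - b * b^*) / a by rewrite -expr2 sqrtCK.
have [sR tR] : s^* = s /\ t^* = t by rewrite !conj_ge0 ?sqrtC_ge0 ?psd_diag.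
exists (col2 s (b^* / s)), (col2 0 t).
apply: mx2P; rewrite mxE !rank1E !mxE /= ?M10 -/a -/b -/c ?sR ?tR.
all: rewrite ?(rmorphM, fmorphV) /= ?conjCK ?sR ?conjC0 ?mulr0 ?addr0.
- by rewrite s2.
- by field.
- by field.
- by rewrite t2 -s2; field.
Qed.

Lemma mxtrace2 (M : 'M[algC]_2) : \tr M = M 0 0 + M 1 1.
Proof. by rewrite /mxtrace !big_ord_recl big_ord0 addr0; congr (_ + M _ _); apply: val_inj. Qed.

(** * The spin flip of a qubit effect *)

Definition bar_mx (M : 'M[algC]_2) : 'M[algC]_2 := \tr M *: 1%:M - M.

Fact bar_mx_is_linear : linear bar_mx.
Proof.
by move=> c M N; rewrite /bar_mx mxtraceD mxtraceZ scalerDl -scalerA scalerBr opprD addrACA.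
Qed.

HB.instance Definition _ :=
  GRing.isLinear.Build algC 'M[algC]_2 'M[algC]_2 _ bar_mx bar_mx_is_linear.

Lemma bar_mx1 : bar_mx 1%:M = 1%:M.
Proof. by rewrite /bar_mx mxtrace1 scaler_nat mulr2n addrK. Qed.

Lemma bar_mxK : involutive bar_mx.
Proof.
by move=> M; rewrite {2}/bar_mx linearB linearZ /= bar_mx1 /bar_mx opprB addrC subrK.
Qed.

Lemma bar_rank1 (u : 'cV[algC]_2) :
  bar_mx (u *m adj_mx u) = let u' := col2 (- (u 1 0)^*) (u 0 0)^* in u' *m adj_mx u'.
Proof.
by rewrite /bar_mx mxtrace2; apply: mx2P; rewrite !(rank1E, mxE) /= ?rmorphN /= ?conjCK; ring.
Qed.

Lemma psd_bar (M : 'M[algC]_2) : psd M -> psd (bar_mx M).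
Proof.
by case/psd2_rank1_sum=> u [w ->]; rewrite linearD /= !bar_rank1; apply: psdD; apply: psd_rank1.
Qed.

Lemma sum_boolZ (T : finType) (V : lmodType algC) (P : pred T) (F : T -> V) :
  \sum_t (P t)%:R *: F t = \sum_(t | P t) F t.
Proof.
by rewrite [RHS]big_mkcond; apply: eq_bigr => t _; case: (P t); rewrite ?scale1r ?scale0r.
Qed.

Lemma prob_dist_delta n (x : 'I_n) : prob_dist (fun i => (x == i)%:R : algC).
Proof.
split=> [i|]; first exact: ler0n.
by rewrite (bigD1 x) //= eqxx big1 ?addr0 // => i; rewrite eq_sym => /negbTE ->.
Qed.

Lemma sum_pair_fst (I J : finType) (V : nmodType) (F : I -> J -> V) i :
  \sum_(p : I * J | p.1 == i) F p.1 p.2 = \sum_j F i j.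
Proof.
rewrite -(big_pred1_eq +%R i (fun i => \sum_j F i j)) pair_big /=.
by apply: eq_bigl => -[a b]; rewrite andbT.
Qed.

Lemma sum_pair_snd (I J : finType) (V : nmodType) (F : I -> J -> V) j :
  \sum_(p : I * J | p.2 == j) F p.1 p.2 = \sum_i F i j.
Proof.
under [RHS]eq_bigr => i _ do rewrite -(big_pred1_eq +%R j (F i)).
by rewrite pair_big.
Qed.

Lemma sum_enum_val (T : finType) (V : nmodType) (F : T -> V) :
  \sum_(j < #|T|) F (enum_val j) = \sum_t F t.
Proof. by rewrite (big_enum_val (A := T)). Qed.

(** * Projective measurements *)

Lemma psd_adj_mx n (M : 'M[algC]_n) : psd M -> adj_mx M = M.
Proof. by move=> hM; apply/matrixP=> i j; rewrite adj_mxE (psd_herm j i hM). Qed.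

Lemma adj_mx_mul_eq0 m n (X : 'M[algC]_(m, n)) : adj_mx X *m X = 0 -> X = 0.
Proof.
move=> /matrixP XX0; apply/matrixP=> i j; rewrite mxE; apply/eqP.
have /eqP := XX0 j j; rewrite !mxE psumr_eq0 => [/allP/(_ i (mem_index_enum _))|k _].
  by rewrite adj_mxE mulrC mul_conjC_eq0.
by rewrite adj_mxE mulrC mul_conjC_ge0.
Qed.

(* P_k = sum_l P_k P_l P_k has positive semidefinite terms, so P_k P_i P_k = 0 for i <> k. *)
Lemma projective_povm_orth n m (P : 'I_m -> 'M[algC]_n) : projective_povm P ->
  forall i k, i != k -> P i *m P k = 0.
Proof.
move=> [[P_psd P_sum] P_idem] i k ik.
have P_adj l : adj_mx (P l) = P l := psd_adj_mx (P_psd l).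
pose X l := P k *m P l *m P k.
have X_psd l : psd (X l) by rewrite /X -{1}P_adj; apply: psd_congr.
have X_sum0 : \sum_(l | l != k) X l = 0.
  have : \sum_l X l = X k + \sum_(l | l != k) X l := bigD1 k isT.
  rewrite /X -mulmx_suml -mulmx_sumr P_sum mulmx1 !P_idem.
  by rewrite -{1}[P k]addr0 => /addrI.
have /eqP := congr1 mxtrace X_sum0; rewrite raddf_sum mxtrace0.
rewrite psumr_eq0 => [/allP/(_ i (mem_index_enum _))|l _]; last exact: psd_trace_ge0.
rewrite ik => /eqP/(psd_trace_eq0 (X_psd i)) Xi0.
apply: adj_mx_mul_eq0; rewrite adj_mxM !P_adj -mulmxA (mulmxA (P i)) P_idem mulmxA.
exact: Xi0.
Qed.

Lemma rank1_sqr n (u : 'cV[algC]_n) :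
  (u *m adj_mx u) *m (u *m adj_mx u) = \tr (u *m adj_mx u) *: (u *m adj_mx u).
Proof.
rewrite mulmxA -(mulmxA u) [adj_mx u *m u]mx11_scalar mul_mx_scalar -scalemxAl.
by rewrite mxtrace_mulC /mxtrace big_ord1.
Qed.

(* The projector onto the line of v, with junk value the projector onto e_0 when v = 0. *)
Definition rank1_proj n (v : 'cV[algC]_n.+1) : 'M[algC]_n.+1 :=
  let u := if \tr (v *m adj_mx v) == 0 then delta_mx 0 0 else v in
  (\tr (u *m adj_mx u))^-1 *: (u *m adj_mx u).

Section Rank1Proj.
Variables (n : nat) (v : 'cV[algC]_n.+1).

Let u := if \tr (v *m adj_mx v) == 0 then delta_mx 0 0 else v.

Let tr_u_neq0 : \tr (u *m adj_mx u) != 0.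
Proof.
rewrite /u; case: ifP => [_|/negbT //].
by rewrite mxtrace_mulC adj_delta mul_delta_mx /mxtrace big_ord1 mxE eqxx oner_eq0.
Qed.

Lemma rank1_proj_psd : psd (rank1_proj v).
Proof. by apply: psdZ (psd_rank1 _); rewrite invr_ge0; apply/psd_trace_ge0/psd_rank1. Qed.

Lemma rank1_proj_idem : rank1_proj v *m rank1_proj v = rank1_proj v.
Proof.
rewrite /rank1_proj -/u -scalemxAl -scalemxAr rank1_sqr !scalerA.
by congr (_ *: _); field.
Qed.

Lemma mxtrace_rank1_proj : \tr (rank1_proj v) = 1.
Proof. by rewrite /rank1_proj -/u mxtraceZ mulVf. Qed.

Lemma rank1_projZ : \tr (v *m adj_mx v) *: rank1_proj v = v *m adj_mx v.
Proof.
rewrite /rank1_proj -/u /u; have [tr0|tr_neq0] := eqVneq (\tr (v *m adj_mx v)) 0.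
  by rewrite tr0 scale0r (psd_trace_eq0 (psd_rank1 v) tr0).
by rewrite scalerA mulfV ?scale1r.
Qed.

End Rank1Proj.

Definition proj_pair (v : 'cV[algC]_2) : 'I_2 -> 'M[algC]_2 :=
  fun i => if i == 0 then rank1_proj v else bar_mx (rank1_proj v).

Lemma proj_pair_projective v : projective_povm (proj_pair v).
Proof.
have barE : bar_mx (rank1_proj v) = 1%:M - rank1_proj v.
  by rewrite /bar_mx mxtrace_rank1_proj scale1r.
split; [split|] => [i|| i]; rewrite /proj_pair.
- by case: ifP => _; [|apply: psd_bar]; apply: rank1_proj_psd.
- by rewrite big_ord_recl big_ord1 /= barE addrC subrK.
- case: ifP => _; rewrite ?barE ?rank1_proj_idem //.
  by rewrite mulmxBr mulmx1 mulmxBl mul1mx rank1_proj_idem subrr subr0.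
Qed.

(** * Joint measurability of A and bar A *)

Definition joint_measurement k n m (A : 'I_n -> 'M[algC]_k) (B : 'I_m -> 'M[algC]_k)
    (G : 'I_n -> 'I_m -> 'M[algC]_k) : Prop :=
  [/\ forall a b, psd (G a b), forall a, \sum_b G a b = A a & forall b, \sum_a G a b = B b].

Definition jointly_measurable k n m (A : 'I_n -> 'M[algC]_k) (B : 'I_m -> 'M[algC]_k) :=
  exists G, joint_measurement A B G.

Lemma projective_joint_bar m (P : 'I_m -> 'M[algC]_2) : projective_povm P ->
  joint_measurement P (fun k => bar_mx (P k)) (fun i k => P i *m bar_mx (P k) *m P i).
Proof.
move=> hP; have [[P_psd P_sum] P_idem] := hP; split.
- by move=> i k; rewrite -{1}(psd_adj_mx (P_psd i)); apply/psd_congr/psd_bar.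
- move=> i; rewrite -mulmx_suml -mulmx_sumr -(raddf_sum bar_mx) P_sum /= bar_mx1.
  by rewrite mulmx1 P_idem.
- move=> k; rewrite {2}/bar_mx.
  under eq_bigr do rewrite /bar_mx mulmxBr mulmxBl -scalemxAr mulmx1 -scalemxAl P_idem.
  rewrite sumrB -scaler_sumr P_sum (bigD1 k) //= big1 => [|i ik].
    by rewrite addr0 !P_idem.
  by rewrite (projective_povm_orth hP ik) mul0mx.
Qed.

Lemma projective_simulable_jm n (A : 'I_n -> 'M[algC]_2) :
  projective_simulable A -> jointly_measurable A (bar_povm A).
Proof.
move=> [K [p [m [P [q [[p_ge0 _] [P_proj [q_dist A_def]]]]]]]].
pose C j i k := P j i *m bar_mx (P j k) *m P j i.
have C_joint j := projective_joint_bar (P_proj j).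
have q_ge0 j i a : 0 <= q j i a by case: (q_dist j i).
have q_sum1 j i : \sum_a q j i a = 1 by case: (q_dist j i).
exists (fun a b => \sum_j p j *: \sum_i \sum_k (q j i a * q j k b) *: C j i k); split.
- move=> a b; apply/psd_sum => j _; apply/psdZ/psd_sum => // i _.
  apply/psd_sum => k _; apply/psdZ; first exact: mulr_ge0.
  by have [C_psd _ _] := C_joint j; apply: C_psd.
- move=> a; rewrite A_def exchange_big; apply: eq_bigr => j _ /=.
  rewrite -scaler_sumr exchange_big; congr (_ *: _); apply: eq_bigr => i _ /=.
  have [_ <- _] := C_joint j; rewrite exchange_big scaler_sumr.
  by apply: eq_bigr => k _; rewrite -scaler_suml -mulr_sumr q_sum1 mulr1.
- move=> b; rewrite /bar_povm -/(bar_mx (A b)) A_def !raddf_sum exchange_big.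
  apply: eq_bigr => j _ /=; rewrite linearZ raddf_sum -scaler_sumr /=; congr (_ *: _).
  rewrite exchange_big; under eq_bigr do rewrite exchange_big /=.
  rewrite exchange_big; apply: eq_bigr => k _ /=; rewrite linearZ /=.
  have [_ _ <-] := C_joint j; rewrite scaler_sumr; apply: eq_bigr => i _.
  by rewrite -scaler_suml -mulr_suml q_sum1 mul1r.
Qed.

Lemma projective_simulable_fin d n m (A : 'I_n -> 'M[algC]_d) (T : finType)
    (p : T -> algC) (P : T -> 'I_m -> 'M[algC]_d) (q : T -> 'I_m -> 'I_n -> algC) :
  prob_dist p -> (forall t, projective_povm (P t)) -> (forall t i', prob_dist (q t i')) ->
  (forall i, A i = \sum_t p t *: \sum_i' q t i' i *: P t i') ->
  projective_simulable A.
Proof.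
move=> [p_ge0 p_sum] P_proj q_dist A_def.
exists #|T|, (p \o enum_val), (fun=> m), (P \o enum_val), (q \o enum_val).
split; [split|split; [|split]] => //= [|i].
- by rewrite (sum_enum_val p).
- by rewrite A_def -(sum_enum_val (fun t => p t *: \sum_i' q t i' i *: P t i')).
Qed.

Lemma rank1_family_simulable n (A : 'I_n -> 'M[algC]_2) (T : finType)
    (v : T -> 'cV[algC]_2) (a b : T -> 'I_n) :
  povm A ->
  (forall i, A i = \sum_(t | a t == i) v t *m adj_mx (v t)) ->
  (forall i, bar_mx (A i) = \sum_(t | b t == i) v t *m adj_mx (v t)) ->
  projective_simulable A.
Proof.
move=> [_ A_sum] A_def barA_def.
pose w t := \tr (v t *m adj_mx (v t)).
apply: (projective_simulable_fin (p := fun t => w t / 2) (P := fun t => proj_pair (v t))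
  (q := fun t k i => ((if k == 0 then a t else b t) == i)%:R)).
- split=> [t|]; first by rewrite divr_ge0 ?ler0n //; apply/psd_trace_ge0/psd_rank1.
  rewrite -mulr_suml -[RHS](@divff _ 2) ?pnatr_eq0 //; congr (_ / 2).
  have -> : 2 = \tr (\sum_i A i) by rewrite A_sum mxtrace1.
  rewrite raddf_sum (partition_big a xpredT) //.
  by apply: eq_bigr => i _; rewrite A_def raddf_sum.
- by move=> t; apply: proj_pair_projective.
- by move=> t k; apply: prob_dist_delta.
- move=> i; transitivity (2^-1 *: (A i + bar_mx (bar_mx (A i)))).
    by rewrite bar_mxK scalerDr -scalerDl (_ : 2^-1 + 2^-1 = 1) ?scale1r //; field.
  rewrite barA_def A_def raddf_sum -[\sum_(t | a t == i) _]sum_boolZ.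
  rewrite -[\sum_(t | b t == i) _]sum_boolZ -big_split scaler_sumr.
  apply: eq_bigr => t _ /=; rewrite big_ord_recl big_ord1 /proj_pair /=.
  rewrite -(rank1_projZ (v t)) linearZ /= -/(w t).
  rewrite [bar_mx _]linearZ /=; move: (rank1_proj _) => P; move: (bar_mx P) => Pbar.
  by rewrite !scalerDr !scalerA; congr (_ *: _ + _ *: _); ring.
Qed.

Lemma psd_family_simulable n (A : 'I_n -> 'M[algC]_2) (T : finType)
    (H : T -> 'M[algC]_2) (a b : T -> 'I_n) :
  povm A -> (forall t, psd (H t)) ->
  (forall i, A i = \sum_(t | a t == i) H t) ->
  (forall i, bar_mx (A i) = \sum_(t | b t == i) H t) ->
  projective_simulable A.
Proof.
move=> hA H_psd A_def barA_def.
have /fin_all_exists [v Hv] t : exists v : 'I_2 -> 'cV[algC]_2,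
    H t = \sum_k v k *m adj_mx (v k).
  have [u [w ->]] := psd2_rank1_sum (H_psd t).
  by exists (fun k => if k == 0 then u else w); rewrite big_ord_recl big_ord1.
have split_sum (c : T -> 'I_n) i : \sum_(t | c t == i) H t =
    \sum_(s : T * 'I_2 | c s.1 == i) v s.1 s.2 *m adj_mx (v s.1 s.2).
  rewrite (eq_bigr _ (fun t _ => Hv t)) pair_big /=.
  by apply: eq_bigl => s; rewrite andbT.
apply: (rank1_family_simulable (a := a \o fst) (b := b \o fst) hA) => i /=.
  by rewrite A_def split_sum.
by rewrite barA_def split_sum.
Qed.

Lemma jm_projective_simulable n (A : 'I_n -> 'M[algC]_2) :
  povm A -> jointly_measurable A (bar_povm A) -> projective_simulable A.
Proof.
move=> A_povm [G [G_psd G_row G_col]].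
apply: (psd_family_simulable (H := fun ab => G ab.1 ab.2) (a := fst) (b := snd) A_povm).
- by case.
- by move=> i; rewrite sum_pair_fst.
- by move=> i; rewrite sum_pair_snd.
Qed.

(** * Steering *)

Lemma big_mxvec_index m n (V : nmodType) (F : 'I_(m * n) -> V) :
  \sum_x F x = \sum_i \sum_j F (mxvec_index i j).
Proof.
rewrite (reindex _ (curry_mxvec_bij m n)) /= pair_bigA.
by apply: eq_bigr => -[i j] _.
Qed.

Lemma eq_mxvec_index m n (i j : 'I_m) (k l : 'I_n) :
  (mxvec_index i k == mxvec_index j l) = (i == j) && (k == l).
Proof.
have inj : injective (fun p : 'I_m * 'I_n => mxvec_index p.1 p.2).
  move=> [a b] [c e] /(congr1 (fun x => enum_val (cast_ord (esym (mxvec_cast m n)) x))).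
  by rewrite /mxvec_index !cast_ordK !enum_rankK.
by rewrite (inj_eq inj (i, k) (j, l)) xpair_eqE.
Qed.

Lemma tens_idE d (X : 'M[algC]_2) i k j l :
  tens_id d X (mxvec_index i k) (mxvec_index j l) = X i j * (k == l)%:R.
Proof.
rewrite /tens_id summxE (bigD1 i) //= [X in _ + X]big1 => [|i' i'i]; last first.
  rewrite summxE big1 // => j' _; rewrite summxE big1 // => k' _.
  by rewrite !mxE !eq_mxvec_index eq_sym (negbTE i'i) mulr0.
rewrite addr0 summxE (bigD1 j) //= [X in _ + X]big1 => [|j' j'j]; last first.
  rewrite summxE big1 // => k' _.
  by rewrite !mxE !eq_mxvec_index [j == _]eq_sym (negbTE j'j) !andbF mulr0.
rewrite addr0 summxE (bigD1 k) //= [X in _ + X]big1 => [|k' k'k]; last first.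
  by rewrite !mxE !eq_mxvec_index eq_sym (negbTE k'k) andbF mulr0.
by rewrite addr0 !mxE !eq_mxvec_index !eqxx [l == k]eq_sym.
Qed.

Definition cond_mx d (rho : 'M[algC]_(2 * d)) (X : 'M[algC]_2) : 'M[algC]_d :=
  \matrix_(k, l) \sum_i \sum_j X i j * rho (mxvec_index j k) (mxvec_index i l).

Lemma assemblageE d (X : Type) n (Meas : X -> 'I_n -> 'M[algC]_2) rho x a :
  assemblage Meas rho x a = cond_mx (d := d) rho (Meas x a).
Proof.
apply/matrixP=> k l; rewrite !mxE; apply: eq_bigr => i _.
rewrite mxE big_mxvec_index; apply: eq_bigr => j _.
rewrite (bigD1 k) //= big1 => [|k' k'k]; last first.
  by rewrite tens_idE eq_sym (negbTE k'k) mulr0 mul0r.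
by rewrite tens_idE eqxx mulr1 addr0.
Qed.

Section CondMx.
Variables (d : nat) (rho : 'M[algC]_(2 * d)).

Fact cond_mx_is_linear : linear (cond_mx rho).
Proof.
move=> c X Y; apply/matrixP=> k l; rewrite !mxE mulr_sumr -big_split; apply: eq_bigr => i _.
by rewrite mulr_sumr -big_split; apply: eq_bigr => j _; rewrite !mxE mulrDl mulrA.
Qed.

HB.instance Definition _ :=
  GRing.isLinear.Build algC 'M[algC]_2 'M[algC]_d _ (cond_mx rho) cond_mx_is_linear.

Lemma mxtrace_cond_mx1 : \tr (cond_mx rho 1%:M) = \tr rho.
Proof.
rewrite /mxtrace [RHS]big_mxvec_index exchange_big; apply: eq_bigr => k _.
rewrite mxE; apply: eq_bigr => i _.
rewrite (bigD1 i) //= big1 => [|j ji]; last by rewrite mxE eq_sym (negbTE ji) mul0r.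
by rewrite mxE eqxx mul1r addr0.
Qed.

(* The map |l> |-> u (x) |l>. *)
Definition tens_col (u : 'cV[algC]_2) : 'M[algC]_(2 * d, d) :=
  (\matrix_(l < d) mxvec (u *m delta_mx 0 l))^T.

Lemma tens_colE u i k l : tens_col u (mxvec_index i k) l = u i 0 * (k == l)%:R.
Proof. by rewrite !mxE mxvecE mxE big_ord1 mxE eqxx. Qed.

Lemma cond_mx_rank1 u :
  cond_mx rho (u *m adj_mx u) = adj_mx (tens_col u) *m rho *m tens_col u.
Proof.
apply/matrixP=> k l; rewrite mxE [RHS]mxE big_mxvec_index; apply: eq_bigr => i _.
rewrite [RHS](bigD1 l) //= [X in _ + X]big1 => [|l' l'l]; last first.
  by rewrite tens_colE (negbTE l'l) !mulr0.
rewrite addr0 tens_colE eqxx mulr1 mxE big_mxvec_index mulr_suml; apply: eq_bigr => j _.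
rewrite mulr_suml [RHS](bigD1 k) //= [X in _ + X]big1 => [|k' k'k]; last first.
  by rewrite adj_mxE tens_colE (negbTE k'k) mulr0 conjC0 !mul0r.
by rewrite addr0 rank1E adj_mxE tens_colE eqxx mulr1; ring.
Qed.

Lemma psd_cond_mx X : psd rho -> psd X -> psd (cond_mx rho X).
Proof.
move=> rho_psd /psd2_rank1_sum [u [w ->]]; rewrite linearD /= !cond_mx_rank1.
by apply: psdD; apply: psd_congr.
Qed.

End CondMx.

Lemma has_LHS_fin d (X : Type) n (sigma : X -> 'I_n -> 'M[algC]_d) (T : finType)
    (pi : T -> algC) (sl : T -> 'M[algC]_d) (pcond : X -> T -> 'I_n -> algC) :
  prob_dist pi -> (forall t, state (sl t)) -> (forall x t, prob_dist (pcond x t)) ->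
  (forall x a, sigma x a = \sum_t (pi t * pcond x t a) *: sl t) -> has_LHS sigma.
Proof.
move=> [pi_ge0 pi_sum] sl_state pcond_dist sigma_def.
exists #|T|, (pi \o enum_val), (sl \o enum_val), (fun x => pcond x \o enum_val).
split; [split|split; [|split]] => //= [|x a].
- by rewrite (sum_enum_val pi).
- by rewrite sigma_def -(sum_enum_val (fun t => (pi t * pcond x t a) *: sl t)).
Qed.

Lemma state_delta n (i : 'I_n) : state (delta_mx i i : 'M[algC]_n).
Proof.
split; last first.
  by rewrite /mxtrace (bigD1 i) //= big1 => [|j /negbTE ji]; rewrite mxE ?eqxx ?ji ?addr0.
by rewrite -[delta_mx i i](mul_delta_mx (0 : 'I_1)) -adj_delta; apply: psd_rank1.
Qed.

Lemma jm_has_LHS d n (Meas : bool -> 'I_n -> 'M[algC]_2) (rho : 'M[algC]_(2 * d)) :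
  povm (Meas false) -> jointly_measurable (Meas false) (Meas true) -> state rho ->
  has_LHS (assemblage Meas rho).
Proof.
move=> [_ Meas_sum] [G [G_psd G_row G_col]] [rho_psd tr_rho].
have [k0 _] : exists k0 : 'I_d, True.
  case: d rho rho_psd tr_rho => [|d'] rho _; last by exists ord0.
  by rewrite /mxtrace big_ord0 => /eqP; rewrite eq_sym oner_eq0.
pose sigma (t : 'I_n * 'I_n) := cond_mx rho (G t.1 t.2).
have sigma_psd t : psd (sigma t) by apply: psd_cond_mx.
pose pi t := \tr (sigma t).
pose sl t := if pi t == 0 then delta_mx k0 k0 else (pi t)^-1 *: sigma t.
have pi_sl t : pi t *: sl t = sigma t.
  rewrite /sl; case: eqP => [pi0|/eqP pi_neq0]; last by rewrite scalerA mulfV ?scale1r.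
  by rewrite pi0 scale0r (psd_trace_eq0 (sigma_psd t) pi0).
pose out (x : bool) (t : 'I_n * 'I_n) := if x then t.2 else t.1.
apply: (has_LHS_fin (pi := pi) (sl := sl) (pcond := fun x t a => (out x t == a)%:R)).
- split=> [t|]; first exact: psd_trace_ge0.
  rewrite -tr_rho -mxtrace_cond_mx1 -Meas_sum !raddf_sum.
  rewrite -(pair_bigA _ (fun a b => pi (a, b))).
  by apply: eq_bigr => a _; rewrite -G_row !raddf_sum.
- move=> t; rewrite /sl; case: ifP => [_|/negbT pi_neq0]; first exact: state_delta.
  by split; [apply/psdZ; rewrite ?invr_ge0 ?psd_trace_ge0 | rewrite mxtraceZ mulVf].
- by move=> x t; apply: prob_dist_delta.
- move=> x a; rewrite assemblageE.
  under eq_bigr do rewrite mulrC -scalerA pi_sl.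
  rewrite sum_boolZ; case: x; rewrite /out /sigma /=.
  + by rewrite -G_col raddf_sum (sum_pair_snd (fun a b => cond_mx rho (G a b))).
  + by rewrite -G_row raddf_sum (sum_pair_fst (fun a b => cond_mx rho (G a b))).
Qed.

(* |00> + |11>, and rho_phi = |phi+><phi+| for the Bell state |phi+> = (|00> + |11>) / sqrt 2 *)
Definition phi_plus : 'cV[algC]_(2 * 2) := (mxvec 1%:M)^T.

Definition rho_phi : 'M[algC]_(2 * 2) := 2^-1 *: (phi_plus *m adj_mx phi_plus).

Lemma rho_phiE j k i l :
  rho_phi (mxvec_index j k) (mxvec_index i l) = 2^-1 * ((j == k)%:R * (i == l)%:R).
Proof.
rewrite /rho_phi mxE rank1E !mxE !mxvecE !mxE.
by case: (i == l); rewrite ?conjC1 ?conjC0.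
Qed.

Lemma rho_phi_state : state rho_phi.
Proof.
split; first by apply/psdZ/psd_rank1; rewrite invr_ge0 ler0n.
rewrite /mxtrace big_mxvec_index (eq_bigr (fun=> 2^-1)) => [|i _].
  by rewrite sumr_const card_ord mulr2n; field.
rewrite (bigD1 i) //= big1 => [|j /negbTE ji]; last by rewrite rho_phiE eq_sym ji !mul0r mulr0.
by rewrite rho_phiE eqxx mulr1 mulr1 addr0.
Qed.

Lemma cond_mx_phi E : cond_mx rho_phi E = 2^-1 *: E^T.
Proof.
apply/matrixP=> k l; rewrite !mxE (bigD1 l) //= [X in _ + X]big1 => [|i /negbTE il]; last first.
  by rewrite big1 // => j _; rewrite rho_phiE il !mulr0.
rewrite addr0 (bigD1 k) //= [X in _ + X]big1 => [|j /negbTE jk]; last first.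
  by rewrite rho_phiE jk mul0r !mulr0.
by rewrite rho_phiE !eqxx !mulr1 addr0 mulrC.
Qed.

Lemma has_LHS_phi_jm n (Meas : bool -> 'I_n -> 'M[algC]_2) :
  has_LHS (assemblage Meas rho_phi) -> jointly_measurable (Meas false) (Meas true).
Proof.
move=> [L [pi [sl [pc [[pi_ge0 _] [sl_state [pc_dist sigma_def]]]]]]].
have pc_ge0 x l a : 0 <= pc x l a by case: (pc_dist x l).
have pc_sum1 x l : \sum_a pc x l a = 1 by case: (pc_dist x l).
have Meas_def x a : Meas x a = \sum_l (2 * (pi l * pc x l a)) *: (sl l)^T.
  have := cond_mx_phi (Meas x a); rewrite -assemblageE sigma_def.
  move=> /(congr1 (fun M => (2 *: M)^T)); rewrite scalerA mulfV ?pnatr_eq0 // scale1r trmxK.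
  move=> <-; rewrite linearZ linear_sum /= scaler_sumr.
  by apply: eq_bigr => l _; rewrite linearZ scalerA.
exists (fun a b => \sum_l (2 * (pi l * pc false l a * pc true l b)) *: (sl l)^T); split.
- move=> a b; apply/psd_sum => l _; apply: psdZ; last by apply/psd_trmx; case: (sl_state l).
  by rewrite !mulr_ge0 ?ler0n.
- move=> a; rewrite Meas_def exchange_big; apply: eq_bigr => l _ /=.
  by rewrite -scaler_suml -!mulr_sumr pc_sum1 mulr1.
- move=> b; rewrite Meas_def exchange_big; apply: eq_bigr => l _ /=.
  by rewrite -scaler_suml -mulr_sumr -mulr_suml -mulr_sumr pc_sum1 mulr1.
Qed.

Theorem corollary2 (n : nat) (A : 'I_n -> 'M[algC]_2) :
  povm A ->
  (projective_simulable A <->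
   forall (d : nat) (rho : 'M[algC]_(2 * d)),
     state rho -> ~ demonstrates_steering (pair_A_barA A) rho).
Proof.
move=> A_povm; split=> [/projective_simulable_jm A_jm d rho rho_state|no_steering].
  by apply; apply: jm_has_LHS.
apply: jm_projective_simulable => //; apply: (has_LHS_phi_jm (Meas := pair_A_barA A)).
exact: NNPP (no_steering 2%N rho_phi rho_phi_state).
Qed.
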